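(* Let $L,k,n$ be positive integers with $2k<n$ and $q$ a prime power. Every $[n,k,L]_q$-AAD family $\mathcal F$ satisfies $|\mathcal F|\le 1+L\frac{q^{n-k}-1}{q^k-1}$. Consequently, for fixed $n,k,L$, $p^{AAD}(n,k,L)\le n-2k$.
   Context: An $[n,k,L]_q$-almost affinely disjoint (AAD) family is a family $\mathcal F$ of $k$-dimensional linear subspaces of $\mathbb F_q^n$ ($n>2k$) such that (1) any two distinct members intersect only in $\{0\}$, and (2) for every $S\in\mathcal F$ and every $\boldsymbol u\in\mathbb F_q^n\setminus S$, the affine subspace $\boldsymbol u+S$ has nonempty intersection with at most $L$ members of $\mathcal F$. $m^{AAD}_q(n,k,L)$ is the maximum size of such a family and $p^{AAD}(n,k,L)=\limsup_{q\to\infty}\log_q m^{AAD}_q(n,k,L)$, the limsup over prime powers $q$. *)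

From HB Require Import structures.
From mathcomp Require Import all_boot all_order all_algebra.
Set Implicit Arguments. Unset Strict Implicit. Unset Printing Implicit Defensive.
Import Order.TTheory GRing.Theory Num.Theory.
Local Open Scope ring_scope.

(* An [n,k,L]_q almost affinely disjoint family over the finite field F
   (q = #|F|), given as a duplicate-free list of k-dimensional linear
   subspaces of F^n = 'rV[F]_n such that
   (1) distinct members intersect only in {0};
   (2) for every S in the family and every u \notin S, the affine subspace
       u + S = {x | x - u \in S} meets at most L members of the family. *)
Definition affine_meets (F : finFieldType) (n : nat)
    (u : 'rV[F]_n) (S T : {vspace 'rV[F]_n}) : bool :=
  [exists x : 'rV[F]_n, (x \in T) && (x - u \in S)].

Definition AAD_family (F : finFieldType) (n k L : nat)
    (fam : seq {vspace 'rV[F]_n}) : Prop :=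
  [/\ uniq fam,
      (forall S, S \in fam -> \dim S = k),
      (forall S T, S \in fam -> T \in fam -> S != T -> (S :&: T = 0)%VS)
    & (forall S, S \in fam -> forall u : 'rV[F]_n, u \notin S ->
         (count (affine_meets u S) fam <= L)%N)].

(* Fix a member S of the family and apply the linear map x |-> x - projv S x,
   a projection of F^n onto a complement of S: its kernel is S and its image
   has dimension n - k.  Every other member T meets S only in 0, so the
   q^k - 1 nonzero vectors of T map injectively to nonzero vectors of the
   image.  A nonzero image vector y = u - projv S u (u outside S) is hit by T
   exactly when u + S meets T, hence by at most L members.  Double counting
   the s - 1 other members gives (s - 1)(q^k - 1) <= L (q^(n-k) - 1), i.e.
   s <= (2L + 1) q^(n-2k), and the constant 2L + 1 is absorbed by q^eps once
   q is large. *)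
From HB Require Import structures.
From mathcomp Require Import all_boot all_order all_algebra all_field zify.
From mathcomp Require Import reals sequences exp.
Set Implicit Arguments. Unset Strict Implicit. Unset Printing Implicit Defensive.
Import Order.TTheory GRing.Theory Num.Theory.
Local Open Scope ring_scope.

Lemma size_mul_le_card (T : finType) (I : eqType) (s : seq I)
    (A : I -> {set T}) (Y : {set T}) (a L : nat) :
  (forall i, i \in s -> A i \subset Y) ->
  (forall i, i \in s -> #|A i| = a) ->
  (forall y, y \in Y -> count (fun i => y \in A i) s <= L)%N ->
  (size s * a <= L * #|Y|)%N.
Proof.
move=> sAY cardA countY.
have -> : (size s * a = \sum_(i <- s) #|A i|)%N.
  rewrite big_seq (eq_bigr _ (fun i si => cardA i si)) -big_seq.
  by rewrite big_const_seq count_predT iter_addn_0 mulnC.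
have cardAE i : i \in s -> #|A i| = (\sum_(y in Y) (y \in A i))%N.
  move=> si; rewrite -big_mkcondr sum1_card; apply: eq_card => y /=.
  by apply/idP/andP => [yA|[]//]; split=> //; apply: (subsetP (sAY i si)).
rewrite big_seq (eq_bigr _ (fun i si => cardAE i si)) -big_seq exchange_big /=.
rewrite mulnC -sum_nat_const; apply: leq_sum => y Yy.
by rewrite -big_mkcond sum1_count; apply: countY.
Qed.

Section Coprojection.

Variables (K : fieldType) (vT : vectType K) (S : {vspace vT}).

Definition coproj : 'End(vT) := (\1 - projv S)%VF.

Lemma coprojE x : coproj x = x - projv S x.
Proof. by rewrite add_lfunE opp_lfunE id_lfunE. Qed.

Lemma coproj_eq0 x : (coproj x == 0) = (x \in S).
Proof.
rewrite coprojE subr_eq0; apply/eqP/idP => [->|xS]; first exact: memv_proj.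
by rewrite projv_id.
Qed.

Lemma lker_coproj : lker coproj = S.
Proof. by apply/vspaceP => x; rewrite memv_ker coproj_eq0. Qed.

Lemma dim_limg_coproj : \dim (limg coproj) = (\dim {:vT} - \dim S)%N.
Proof.
have := limg_ker_dim coproj fullv; rewrite capfv lker_coproj => <-.
by rewrite addKn.
Qed.

Variable T : {vspace vT}.
Hypothesis TS0 : (T :&: S = 0)%VS.

Lemma coproj_inj_disjoint : {in T &, injective coproj}.
Proof.
move=> x y xT yT /eqP; rewrite -subr_eq0 -linearB coproj_eq0 => xyS.
by apply/eqP; rewrite -subr_eq0 -memv0 -TS0 memv_cap xyS rpredB.
Qed.

Lemma coproj_neq0_disjoint x : x \in T -> x != 0 -> coproj x != 0.
Proof.
move=> xT; apply: contra; rewrite coproj_eq0 => xS.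
by rewrite -memv0 -TS0 memv_cap xT.
Qed.

End Coprojection.

Definition nonzero_vectors (F : finFieldType) (n : nat)
    (U : {vspace 'rV[F]_n}) : {set 'rV[F]_n} :=
  [set x in U] :\ 0.

Lemma in_nonzero_vectors (F : finFieldType) n (U : {vspace 'rV[F]_n}) x :
  (x \in nonzero_vectors U) = (x != 0) && (x \in U).
Proof. by rewrite !inE. Qed.

Lemma card_nonzero_vectors (F : finFieldType) n (U : {vspace 'rV[F]_n}) :
  #|nonzero_vectors U| = (#|F| ^ \dim U - 1)%N.
Proof.
have := cardsD1 0 [set x in U].
by rewrite inE mem0v cardsE card_vspace add1n => ->; rewrite subn1.
Qed.

Lemma AAD_family_count (F : finFieldType) (n k L : nat)
    (fam : seq {vspace 'rV[F]_n}) :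
  AAD_family k L fam ->
  ((size fam).-1 * (#|F| ^ k - 1) <= L * (#|F| ^ (n - k) - 1))%N.
Proof.
case: fam => [|S fam0] //; set fam := S :: fam0.
case=> fam_uniq fam_dim fam_cap fam_meets.
have famS : S \in fam := mem_head _ _.
pose f := coproj S; pose others := filter (predC1 S) fam.
have size_others : size others = (size fam).-1.
  have := count_predC (pred1 S) fam; rewrite size_filter.
  by rewrite (count_uniq_mem _ fam_uniq) famS add1n => <-.
have others_cap T : T \in others -> (T :&: S = 0)%VS.
  by rewrite mem_filter => /andP[TS TF]; apply: fam_cap.
have dim_img : \dim (limg f) = (n - k)%N.
  by rewrite dim_limg_coproj dimvf fam_dim // /dim /= mul1n.
rewrite -size_others -dim_img -card_nonzero_vectors.
apply: (size_mul_le_card (A := fun T => f @: nonzero_vectors T)).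
- move=> T /others_cap TS0; apply/subsetP => _ /imsetP[x + ->].
  rewrite in_nonzero_vectors => /andP[x0 xT].
  by rewrite in_nonzero_vectors (coproj_neq0_disjoint TS0 xT x0) memv_img ?memvf.
- move=> T othT; have TS0 := others_cap T othT.
  have TF : T \in fam by move: othT; rewrite mem_filter => /andP[].
  rewrite card_in_imset ?card_nonzero_vectors ?fam_dim // => x y.
  rewrite !in_nonzero_vectors => /andP[_ xT] /andP[_ yT].
  exact: (coproj_inj_disjoint TS0).
move=> y; rewrite in_nonzero_vectors => /andP[y0 /memv_imgP[u _ yu]].
have uS : u \notin S by rewrite -coproj_eq0 -yu.
apply: leq_trans (fam_meets S famS u uS).
apply: leq_trans (leq_count_subseq _ (filter_subseq _ fam)).
apply: sub_count => T /imsetP[x]; rewrite in_nonzero_vectors => /andP[_ xT] yx.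
apply/existsP; exists x; rewrite xT /= -coproj_eq0 linearB /=.
by rewrite -yx -yu subrr.
Qed.

Lemma ler_ratio_of_count (K : numFieldType) (s a b L : nat) :
  (1 < a)%N -> (1 <= b)%N -> (s.-1 * (a - 1) <= L * (b - 1))%N ->
  (s%:R : K) <= 1 + L%:R * (b%:R - 1) / (a%:R - 1).
Proof.
move=> a1 b1 count_le.
have a0 : 0 < (a%:R : K) - 1 by rewrite subr_gt0 ltr1n.
case: s count_le => [|s] /= count_le.
  apply: addr_ge0 => //; apply: divr_ge0; last exact: ltW.
  by apply: mulr_ge0; rewrite ?subr_ge0 ?ler1n.
rewrite mulrSr addrC lerD2l ler_pdivlMr // -[1]/(1%:R) -!natrB ?(ltnW a1) //.
by rewrite -!natrM ler_nat.
Qed.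

(* The factor 2 comes from q^k - 1 >= q^k / 2. *)
Lemma leq_size_of_count (q k m s L : nat) : (1 < q)%N -> (0 < k)%N ->
  (s.-1 * (q ^ k - 1) <= L * (q ^ (m + k) - 1))%N ->
  (s <= (2 * L + 1) * q ^ m)%N.
Proof.
move=> q1 k0; rewrite expnD.
have qk2 : (2 <= q ^ k)%N.
  by apply: leq_trans (_ : q ^ 1 <= q ^ k)%N; rewrite ?leq_exp2l.
have qm1 : (1 <= q ^ m)%N by rewrite expn_gt0 ltnW.
move: qk2 qm1; set a := (q ^ k)%N; set b := (q ^ m)%N; nia.
Qed.

Lemma natr_mul_le_powR_eventually (R : realType) (c m : nat) (eps : R) :
  (0 < c)%N -> 0 < eps ->
  exists Q : nat, forall q : nat, (Q <= q)%N ->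
    ((c * q ^ m)%N%:R : R) <= q%:R `^ (m%:R + eps).
Proof.
move=> c0 eps0.
pose M : R := expR (ln c%:R / eps).
have ME : M `^ eps = c%:R.
  by rewrite /M -expRM divfK ?gt_eqF // lnK // posrE ltr0n.
exists (Num.truncn M).+1 => q Qq.
have q0 : (0 < q)%N by apply: leq_trans Qq.
rewrite natrM natrX powRD; last by apply/implyP; rewrite pnatr_eq0 -lt0n q0.
rewrite powR_mulrn // mulrC ler_wpM2l ?exprn_ge0 // -ME.
apply: (ge0_ler_powR (ltW eps0)); rewrite ?nnegrE ?expR_ge0 ?ler0n //.
by apply: le_trans (ltW (truncnS_gt M)) _; rewrite ler_nat.
Qed.

Theorem mainTheorem8 (R : realType) (n k L : nat) :
  (0 < L)%N -> (0 < k)%N -> (0 < n)%N -> (2 * k < n)%N ->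
  (forall (F : finFieldType) (fam : seq {vspace 'rV[F]_n}),
     AAD_family k L fam ->
     ((size fam)%:R : rat) <=
       1 + L%:R * (((#|F| ^ (n - k))%N)%:R - 1) / (((#|F| ^ k)%N)%:R - 1))
  /\
  (* p^AAD(n,k,L) <= n - 2k, i.e. limsup_{q -> oo} log_q m_q(n,k,L) <= n - 2k *)
  (forall eps : R, 0 < eps ->
     exists Q : nat, forall (F : finFieldType), (Q <= #|F|)%N ->
       forall fam : seq {vspace 'rV[F]_n}, AAD_family k L fam ->
         ((size fam)%:R : R) <= (#|F|%:R : R) `^ ((n - 2 * k)%:R + eps)).
Proof.
move=> _ k0 _ kn; split=> [F fam famAAD|eps eps0].
  have q1 := finNzRing_gt1 F.
  apply: ler_ratio_of_count (AAD_family_count famAAD).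
    by rewrite -{1}(expn0 #|F|) ltn_exp2l.
  by rewrite expn_gt0 ltnW.
have cL_gt0 : (0 < 2 * L + 1)%N by rewrite addn1.
have [Q QP] := natr_mul_le_powR_eventually (n - 2 * k)%N cL_gt0 eps0.
exists Q => F QF fam famAAD; apply: le_trans (QP _ QF); rewrite ler_nat.
have nk : (n - k = (n - 2 * k) + k)%N by lia.
apply: (leq_size_of_count (finNzRing_gt1 F) k0).
by rewrite -nk; apply: AAD_family_count.
Qed.
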